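(* Let $D$ be a strongly connected digraph with at least two vertices and let $T$ be a DFS tree of $D$ rooted at $r$. Let $x_1,\ldots,x_k$ be the out-neighbors of $r$ in $T$, and for each $i\in\{1,\ldots,k\}$ let $T_i$ be the subtree of $T$ consisting of $r$, the arc $(r,x_i)$ and all descendants of $x_i$ (so $T=\bigcup_i T_i$ and $V(T_i)\cap V(T_j)=\{r\}$ for $i\ne j$). For each $i$ let $G_{T_i}$ be the undirected graph with vertex set $V(T_i)$ in which $uv$ is an edge whenever $D$ has a backward arc between $u$ and $v$ (in either direction). Then $\chi_A(D)\le \max_{1\le i\le k}\chi(G_{T_i})$.
   Context: Digraphs are finite and loopless; paths and cycles are directed. $\chi$ is the usual chromatic number of an undirected graph; $\chi_A$ is the minimum number of colors in a vertex coloring of a digraph whose color classes all induce acyclic subdigraphs. A DFS tree $T$ of a strongly connected digraph $D$ rooted at $r$ is the spanning out-branching of $D$ produced by a depth-first search of $D$ started at $r$. A vertex $v$ is a descendant of $u$ if $T$ contains a directed $uv$-path. An arc $(u,v)$ of $D$ is a backward arc if $u$ is a descendant of $v$. *)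

From mathcomp Require Import all_boot.
Set Implicit Arguments. Unset Strict Implicit. Unset Printing Implicit Defensive.

(* A digraph is a finType V with an arc relation e : rel V (loopless assumed
   separately).  A subdigraph/tree is also represented by an arc relation. *)

(* One run of depth-first search, literally: state = (visited vertices,
   stack with current vertex on top, tree arcs produced so far). *)
Inductive dfs_run (V : finType) (e : rel V) (r : V)
  : seq V -> seq V -> seq (V * V) -> Prop :=
| dfs_init : dfs_run e r [:: r] [:: r] [::]
| dfs_push vis u st A w :
    dfs_run e r vis (u :: st) A -> e u w -> w \notin vis ->
    dfs_run e r (w :: vis) (w :: u :: st) ((u, w) :: A)
| dfs_pop vis u st A :
    dfs_run e r vis (u :: st) A -> (forall w, e u w -> w \in vis) ->
    dfs_run e r vis st A.

Definition dfs_tree (V : finType) (e : rel V) (r : V) (T : rel V) : Prop :=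
  exists vis A, dfs_run e r vis [::] A /\ forall u v, T u v = ((u, v) \in A).

Definition descendant (V : finType) (T : rel V) (u v : V) : bool := connect T u v.

Definition backward (V : finType) (e T : rel V) (u v : V) : bool :=
  e u v && descendant T v u.

Definition strongly_connected (V : finType) (e : rel V) : Prop :=
  forall u v : V, connect e u v.

Definition proper_colorable (V : finType) (S : {set V}) (adj : rel V) (k : nat)
  : bool :=
  [exists c : {ffun V -> 'I_k},
    [forall u, forall v, [&& u \in S, v \in S & adj u v] ==> (c u != c v)]].

(* Chromatic number: least k (<= #|V|, which always suffices) admitting a
   proper k-colouring. *)
Definition chi (V : finType) (S : {set V}) (adj : rel V) : nat :=
  \big[minn/#|V|]_(k < #|V|.+1 | proper_colorable S adj k) k.

Definition induced (V : finType) (e : rel V) (S : {set V}) : rel V :=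
  [rel x y | [&& x \in S, y \in S & e x y]].

Definition acyclic_on (V : finType) (e : rel V) (S : {set V}) : bool :=
  ~~ [exists u, exists v, induced e S u v && connect (induced e S) v u].

Definition acyclic_colorable (V : finType) (e : rel V) (k : nat) : bool :=
  [exists c : {ffun V -> 'I_k},
    [forall i : 'I_k, acyclic_on e [set v | c v == i]]].

Definition chiA (V : finType) (e : rel V) : nat :=
  \big[minn/#|V|]_(k < #|V|.+1 | acyclic_colorable e k) k.

Definition subtree_vertices (V : finType) (T : rel V) (r x : V) : {set V} :=
  [set v | (v == r) || descendant T x v].

Definition back_adj (V : finType) (e T : rel V) : rel V :=
  [rel u v | backward e T u v || backward e T v u].

From mathcomp Require Import all_boot fingroup perm.
Set Implicit Arguments. Unset Strict Implicit. Unset Printing Implicit Defensive.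

(* Number the vertices by DFS finishing time, latest first.  Every arc of D
   that is not backward increases this rank, so every directed cycle uses a
   backward arc.  A backward arc joins a vertex to one of its ancestors, hence
   lies inside a single T_i, and distinct T_i share only r.  So colour each
   G_{T_i} properly with max_i chi(G_{T_i}) colours, permute colours so that r
   always gets the same one, and glue: no colour class contains a backward arc,
   hence none contains a cycle. *)

Section BigMinOrd.

Variables (n : nat) (P : pred nat).

Let mu := \big[minn/n]_(k < n.+1 | P k) k.

Lemma bigmin_ord_le m : m <= n -> P m -> mu <= m.
Proof.
rewrite -ltnS => lt_mn Pm; rewrite /mu.
have: Ordinal lt_mn \in index_enum 'I_n.+1 by rewrite mem_index_enum.
elim: (index_enum _) => [//|i s IHs]; rewrite in_cons big_cons.
case/orP => [/eqP <-|/IHs le_m]; first by rewrite Pm geq_minl.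
by case: ifP => // _; apply: leq_trans (geq_minr _ _) le_m.
Qed.

Lemma bigmin_ord_le_id : mu <= n.
Proof.
apply: (big_ind (fun y => y <= n)) => // [x y le_xn _|i _].
  exact: leq_trans (geq_minl _ _) le_xn.
by rewrite -ltnS.
Qed.

Lemma bigmin_ord_attained : mu < n -> P mu.
Proof.
have: (mu == n) || P mu.
  apply: (big_ind (fun y => (y == n) || P y)) => [|x y|i ->]; rewrite ?eqxx ?orbT //.
  by rewrite /minn; case: ifP.
by case/orP => [/eqP ->|//]; rewrite ltnn.
Qed.

End BigMinOrd.

Section Colorings.

Variable V : finType.

Lemma proper_colorableP (S : {set V}) (adj : rel V) k :
  reflect (exists c : {ffun V -> 'I_k},
             forall u v, u \in S -> v \in S -> adj u v -> c u != c v)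
          (proper_colorable S adj k).
Proof.
apply: (iffP existsP) => [[c /forallP cP]|[c cP]]; exists c.
  by move=> u v uS vS uv; move: (cP u) => /forallP /(_ v); rewrite uS vS uv.
by apply/forallP => u; apply/forallP => v; apply/implyP => /and3P [uS vS]; apply: cP.
Qed.

Lemma proper_colorable_widen (S : {set V}) (adj : rel V) k m :
  k <= m -> proper_colorable S adj k -> proper_colorable S adj m.
Proof.
move=> le_km /proper_colorableP [c cP]; apply/proper_colorableP.
exists [ffun v => widen_ord le_km (c v)] => u v uS vS uv.
by rewrite !ffunE; apply: contra (cP u v uS vS uv) => /eqP [] /val_inj ->.
Qed.

Lemma proper_colorable_gt0 (S : {set V}) (adj : rel V) k (v : V) :
  proper_colorable S adj k -> 0 < k.
Proof. by case/existsP => c _; apply: leq_ltn_trans (ltn_ord (c v)). Qed.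

Lemma chi_le_colorable (S : {set V}) (adj : rel V) k :
  chi S adj <= k -> k < #|V| -> proper_colorable S adj k.
Proof.
move=> le_chi_k lt_kV; apply: (proper_colorable_widen le_chi_k).
exact/bigmin_ord_attained/(leq_ltn_trans le_chi_k).
Qed.

Lemma chiA_le_card (e : rel V) : chiA e <= #|V|.
Proof. exact: bigmin_ord_le_id. Qed.

Lemma chiA_le (e : rel V) k : k <= #|V| -> acyclic_colorable e k -> chiA e <= k.
Proof. exact: bigmin_ord_le. Qed.

Lemma acyclic_on_ranked (e : rel V) (S : {set V}) (f : V -> nat) :
  (forall u v, u \in S -> v \in S -> e u v -> f u < f v) -> acyclic_on e S.
Proof.
move=> rank; apply/existsP => -[u /existsP [v /andP [uv vu]]].
have rankS a b : induced e S a b -> f a < f b by case/and3P; apply: rank.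
have: f v <= f u.
  case/connectP: vu {uv} => p.
  elim: p v => [_ _ -> //|w p IHp] x /= /andP [/rankS lt_xw /IHp le_wu] /le_wu.
  exact: leq_trans (ltnW lt_xw).
by rewrite leqNgt rankS.
Qed.

Lemma acyclic_colorable_ranked (e : rel V) k (c : V -> 'I_k) (f : V -> nat) :
  (forall u v, e u v -> c u = c v -> f u < f v) -> acyclic_colorable e k.
Proof.
move=> rank; apply/existsP; exists [ffun v => c v]; apply/forallP => i.
apply: (@acyclic_on_ranked _ _ f) => u v; rewrite !inE !ffunE => /eqP cu /eqP cv uv.
by apply: rank; rewrite ?cu ?cv.
Qed.

Lemma glue_proper_colorings (I : finType) (P : pred I) (S : I -> {set V})
    (adj : rel V) (r : V) m :
  0 < m ->
  (forall x, P x -> r \in S x) ->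
  (forall x y v, P x -> P y -> v \in S x -> v \in S y -> v != r -> x = y) ->
  (forall x, P x -> proper_colorable (S x) adj m) ->
  exists c : V -> 'I_m,
    forall x u v, P x -> u \in S x -> v \in S x -> adj u v -> c u != c v.
Proof.
move=> m_gt0 rS meetS colS; pose k0 : 'I_m := Ordinal m_gt0.
have /fin_all_exists [cx cxP] : forall x, exists c : {ffun V -> 'I_m},
    P x -> forall u v, u \in S x -> v \in S x -> adj u v -> c u != c v.
  move=> x; case: (boolP (P x)) => [/colS /proper_colorableP [c cP]|_].
    by exists c.
  by exists [ffun=> k0].
(* Recolour each piece so that the shared vertex r gets colour k0. *)
pose d x v := tperm (cx x r) k0 (cx x v).
pose c v := if [pick x | P x && (v \in S x)] is Some y then d y v else k0.
have cE x w : P x -> w \in S x -> c w = d x w.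
  move=> Px wS; rewrite /c; case: pickP => [y /andP [Py wSy]|/(_ x)]; last first.
    by rewrite Px wS.
  case: (eqVneq w r) => [->|wr]; first by rewrite /d !tpermL.
  by rewrite (meetS _ _ _ Py Px wSy wS wr).
exists c => x u v Px uS vS uv.
by rewrite !(cE x) // (inj_eq perm_inj) cxP.
Qed.

End Colorings.

Section RootedTree.

Variables (V : finType) (T : rel V) (r : V).

Lemma connect_predecessor a b :
  connect T a b -> a = b \/ exists2 q, connect T a q & T q b.
Proof.
case/connectP => p; elim/last_ind: p => [_ -> | p q _]; first by left.
rewrite rcons_path last_rcons => /andP [ap Tqb] ->; right.
by exists (last a p) => //; apply/connectP; exists p.
Qed.

Hypothesis parent_unique : forall a a' b, T a b -> T a' b -> a = a'.

Lemma connect_comparable a b v :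
  connect T a v -> connect T b v -> connect T a b || connect T b a.
Proof.
case/connectP => p; elim/last_ind: p b v => [|p q IHp] b v.
  by move=> _ /= -> ->; rewrite orbT.
rewrite rcons_path last_rcons => /andP [ap Tq] ->.
case/connect_predecessor => [->|[q' bq' Tq'q]].
  by apply/orP; left; apply: connect_trans (connect1 Tq); apply/connectP; exists p.
by rewrite (parent_unique Tq'q Tq) in bq'; apply: IHp ap erefl bq'.
Qed.

Hypothesis root_no_parent : forall a, ~~ T a r.
Hypothesis root_reaches : forall v, connect T r v.

Lemma connect_to_root a : connect T a r -> a = r.
Proof. by case/connect_predecessor => // -[q _]; rewrite (negbTE (root_no_parent q)). Qed.

Lemma root_child_exists v : v != r -> exists2 x, T r x & connect T x v.
Proof.
move=> vr; have /connectP [[|x p] /= rp v_last] := root_reaches v.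
  by rewrite v_last eqxx in vr.
by case/andP: rp => Trx xp; exists x => //; apply/connectP; exists p.
Qed.

Lemma root_child_unique x y v :
  T r x -> T r y -> connect T x v -> connect T y v -> x = y.
Proof.
move=> Trx Try xv yv; wlog /connect_predecessor: x y Trx Try xv yv / connect T x y.
  by move=> W; case/orP: (connect_comparable xv yv) => [/W|/W/esym]; apply.
case=> [//|[q xq Tqy]]; move: xq; rewrite (parent_unique Tqy Try) => /connect_to_root xr.
by move: (root_no_parent r); rewrite -{2}xr Trx.
Qed.

Notation S := (subtree_vertices T r).

Lemma subtrees_meet_at_root x y v :
  T r x -> T r y -> v \in S x -> v \in S y -> v != r -> x = y.
Proof.
move=> Trx Try + + vr; rewrite !inE (negbTE vr) /=.
exact: root_child_unique.
Qed.

Lemma ancestor_pair_in_subtree u v :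
  u != v -> connect T v u -> exists2 x, T r x & (u \in S x) && (v \in S x).
Proof.
move=> uv vu; case: (eqVneq v r) uv => [-> ur|/root_child_exists [x Trx xv] _].
  have [x Trx xu] := root_child_exists ur.
  by exists x; rewrite // !inE /descendant xu eqxx !orbT.
by exists x; rewrite // !inE /descendant xv (connect_trans xv vu) !orbT.
Qed.

End RootedTree.

Section DepthFirstSearch.

Variables (V : finType) (e : rel V) (r : V).

Definition arc_rel (A : seq (V * V)) : rel V := [rel a b | (a, b) \in A].

Lemma arc_relE A x y : arc_rel A x y = ((x, y) \in A).
Proof. by []. Qed.

Lemma connect_arc_rel_cons a b A :
  subrel (connect (arc_rel A)) (connect (arc_rel ((a, b) :: A))).
Proof.
by apply: connect_sub => x y xy; rewrite connect1 // arc_relE in_cons -arc_relE xy orbT.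
Qed.

Lemma dfs_run_root_visited vis st A : dfs_run e r vis st A -> r \in vis.
Proof.
by elim=> {vis st A} [|vis u st A w _ IH _ _|vis u st A _ IH _];
  rewrite ?in_cons ?eqxx ?IH ?orbT.
Qed.

Lemma dfs_run_stack_visited vis st A : dfs_run e r vis st A -> {subset st <= vis}.
Proof.
elim=> {vis st A} [|vis u st A w _ IH _ _|vis u st A _ IH _] x.
- by [].
- by rewrite !in_cons => /predU1P [->|/IH ->]; rewrite ?eqxx ?orbT.
- by move=> xst; apply: IH; rewrite in_cons xst orbT.
Qed.

Lemma dfs_run_arc_target vis st A a b :
  dfs_run e r vis st A -> (a, b) \in A -> (b \in vis) && (b != r).
Proof.
move=> run; elim: run a b => {vis st A} [//|vis u st A w run' IH _ wvis|//] a b.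
rewrite !in_cons => /predU1P [[_ ->]|/IH /andP [-> ->]]; last by rewrite orbT.
by rewrite eqxx; apply: contraNneq wvis => ->; apply: dfs_run_root_visited run'.
Qed.

Lemma dfs_run_parent_unique vis st A a a' b :
  dfs_run e r vis st A -> (a, b) \in A -> (a', b) \in A -> a = a'.
Proof.
move=> run; elim: run a a' b => {vis st A} [//|vis u st A w run' IH _ wvis|//] a a' b.
have old c : (c, w) \notin A.
  by apply: contra wvis => /(dfs_run_arc_target run') /andP [].
rewrite !in_cons => /predU1P [[-> ->]|ab] /predU1P [[->]|a'b] //.
- by rewrite (negbTE (old _)) in a'b.
- by move=> eb; rewrite eb (negbTE (old _)) in ab.
- exact: IH ab a'b.
Qed.

Lemma dfs_run_reach vis st A x :
  dfs_run e r vis st A -> x \in vis -> connect (arc_rel A) r x.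
Proof.
move=> run; elim: run x => {vis st A} [|vis u st A w run' IH _ _|vis u st A _ IH _] x.
- by rewrite mem_seq1 => /eqP ->.
- have u_vis : u \in vis by apply: (dfs_run_stack_visited run'); rewrite in_cons eqxx.
  have r_w : connect (arc_rel ((u, w) :: A)) r w.
    apply: (connect_trans (connect_arc_rel_cons u w (IH u u_vis))).
    by apply: connect1; rewrite arc_relE in_cons eqxx.
  by rewrite in_cons => /predU1P [->|/IH /connect_arc_rel_cons].
- exact: IH.
Qed.

Lemma dfs_run_stack_ancestral vis st A :
  dfs_run e r vis st A -> pairwise (fun y x => connect (arc_rel A) x y) st.
Proof.
elim=> {vis st A} [|vis u st A w _ IH _ _|vis u st A _ IH _].
- by [].
- have uw : arc_rel ((u, w) :: A) u w by rewrite arc_relE in_cons eqxx.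
  move: IH; rewrite !pairwise_cons => /andP [/allP u_anc st_anc].
  apply/and3P; split.
  + apply/allP => x; rewrite in_cons => /predU1P [->|/u_anc xu]; first exact: connect1.
    exact: connect_trans (connect_arc_rel_cons _ _ xu) (connect1 uw).
  + by apply/allP => x /u_anc /connect_arc_rel_cons.
  + by apply: sub_pairwise st_anc => y x /connect_arc_rel_cons.
- by move: IH; rewrite pairwise_cons => /andP [].
Qed.

(* [fin] lists the popped (finished) vertices, the most recently finished first. *)
Lemma dfs_run_finish_order vis st A : dfs_run e r vis st A ->
  exists fin : seq V,
    [/\ vis =i st ++ fin, uniq st, {in st, forall x, x \notin fin} &
     {in fin, forall u v, e u v -> (v \in vis) &&
        ((v \in fin) && (index u fin < index v fin) || connect (arc_rel A) v u)}].
Proof.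
elim=> {vis st A} [|vis u st A w run [fin [visE st_uniq st_fin fin_arcs]] _ w_vis
        |vis u st A run [fin [visE st_uniq st_fin fin_arcs]] u_done].
- by exists [::]; split=> // x; rewrite cats0.
- have /norP [w_st w_fin] : ~~ ((w \in u :: st) || (w \in fin)) by rewrite -mem_cat -visE.
  exists fin; split.
  + by move=> x; rewrite in_cons visE.
  + by rewrite cons_uniq st_uniq w_st.
  + by move=> x; rewrite in_cons => /predU1P [->|/st_fin].
  + move=> x x_fin v xv; case/andP: (fin_arcs x x_fin v xv) => v_vis ordered.
    rewrite in_cons v_vis orbT; case/orP: ordered => [-> //|vx].
    by rewrite (connect_arc_rel_cons u w vx) orbT.
- move: st_uniq; rewrite cons_uniq => /andP [u_st st_uniq].
  have u_fin : u \notin fin by apply: st_fin; rewrite in_cons eqxx.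
  have u_new y : y \in fin -> (u == y) = false.
    by move=> y_fin; apply: contraNF u_fin => /eqP ->.
  move: (dfs_run_stack_ancestral run); rewrite pairwise_cons => /andP [/allP u_anc _].
  exists (u :: fin); split=> //.
  + by move=> x; rewrite visE !(mem_cat, in_cons) -orbA orbCA.
  + move=> x x_st; rewrite in_cons negb_or st_fin ?in_cons ?x_st ?orbT // andbT.
    by apply: contraNneq u_st => <-.
  + move=> x; rewrite in_cons => /predU1P [->|x_fin] v xv.
      have v_vis := u_done v xv; rewrite v_vis /=.
      move: v_vis; rewrite visE !(mem_cat, in_cons) => /orP [/orP [/eqP ->|v_st]|v_fin].
      * by rewrite connect0 orbT.
      * by rewrite (u_anc v v_st) orbT.
      * by rewrite v_fin orbT eqxx u_new.
    case/andP: (fin_arcs x x_fin v xv) => -> /orP [/andP [v_fin lt_xv]|->].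
      by rewrite in_cons v_fin orbT /index /= !u_new //; apply/orP; left.
    by rewrite orbT.
Qed.

Lemma dfs_complete_run_visits_all vis A :
  strongly_connected e -> dfs_run e r vis [::] A -> forall x, x \in vis.
Proof.
move=> sc run x; have [fin [visE _ _ fin_arcs]] := dfs_run_finish_order run.
have closed u v : u \in vis -> e u v -> v \in vis.
  by rewrite visE => u_fin /(fin_arcs u u_fin) /andP [].
have /connectP [p rp ->] := sc r x.
elim: p r (dfs_run_root_visited run) rp => [//|y p IHp] z z_vis /= /andP [zy yp].
exact: IHp (closed z y z_vis zy) yp.
Qed.

Variable T : rel V.
Hypothesis dfsT : dfs_tree e r T.

Lemma dfs_tree_root_no_parent a : ~~ T a r.
Proof.
case: dfsT => vis [A [run TE]]; rewrite TE.
by apply/negP => /(dfs_run_arc_target run); rewrite eqxx andbF.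
Qed.

Lemma dfs_tree_parent_unique a a' b : T a b -> T a' b -> a = a'.
Proof.
by case: dfsT => vis [A [run TE]]; rewrite !TE; apply: dfs_run_parent_unique run.
Qed.

Hypothesis sc : strongly_connected e.

Lemma dfs_tree_reach v : connect T r v.
Proof.
case: dfsT => vis [A [run TE]]; rewrite (eq_connect (e' := arc_rel A)) //.
exact/(dfs_run_reach run)/(dfs_complete_run_visits_all sc run).
Qed.

Lemma dfs_tree_rank :
  exists f : V -> nat, forall u v, e u v -> ~~ connect T v u -> f u < f v.
Proof.
case: dfsT => vis [A [run TE]].
have [fin [visE _ _ fin_arcs]] := dfs_run_finish_order run.
exists (index^~ fin) => u v uv; rewrite (eq_connect (e' := arc_rel A)) // => vu.
have u_fin : u \in fin by rewrite -visE (dfs_complete_run_visits_all sc run).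
case/andP: (fin_arcs u u_fin v uv) => _ /orP [/andP [_ //]|v_anc_u].
by rewrite v_anc_u in vu.
Qed.

End DepthFirstSearch.

Theorem mainTheorem6 (V : finType) (e : rel V) (r : V) (T : rel V) :
  irreflexive e ->
  strongly_connected e ->
  1 < #|V| ->
  dfs_tree e r T ->
  chiA e <= \max_(x | T r x) chi (subtree_vertices T r x) (back_adj e T).
Proof.
move=> irr sc card_gt1 dfsT.
set S := subtree_vertices T r; set m := \max_(x | T r x) _.
have [le_Vm|lt_mV] := leqP #|V| m; first exact: leq_trans (chiA_le_card e) le_Vm.
have colS x : T r x -> proper_colorable (S x) (back_adj e T) m.
  by move=> Trx; apply: chi_le_colorable lt_mV; apply: leq_bigmax_cond Trx.
have no_parent := dfs_tree_root_no_parent dfsT.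
have unique := dfs_tree_parent_unique dfsT.
have reach := dfs_tree_reach dfsT sc.
have /card_gt0P [v0 v0r] : 0 < #|predC1 r| by rewrite cardC1 -subn1 subn_gt0.
have [x0 Trx0 _] := root_child_exists reach v0r.
have r_S x : T r x -> r \in S x by rewrite inE eqxx.
have [c c_proper] := glue_proper_colorings (proper_colorable_gt0 r (colS x0 Trx0))
  r_S (subtrees_meet_at_root unique no_parent) colS.
have [f rank] := dfs_tree_rank dfsT sc.
apply: chiA_le (ltnW lt_mV) _; apply: (acyclic_colorable_ranked (c := c) (f := f)).
move=> u v uv cuv; apply: (rank _ _ uv); apply/negP => vu.
have neq_uv : u != v by apply: contraTneq uv => ->; rewrite irr.
have [x Trx /andP [uS vS]] := ancestor_pair_in_subtree reach neq_uv vu.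
have back_uv : back_adj e T u v by rewrite /back_adj /= /backward /descendant uv vu.
by move: (c_proper x u v Trx uS vS back_uv); rewrite cuv eqxx.
Qed.
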